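(* Let $N\ge1$ and $j\in\{1,\dots,N\}$. For non-negative SNRs define $$h_j=\mathsf{SNR}_{s,j}+\frac{\mathsf{SNR}_{r,j}\,\mathsf{SNR}_{s,r}}{\mathsf{SNR}_{s,j}+\mathsf{SNR}_{r,j}+\mathsf{SNR}_{s,r}+1}.$$ Then for each fixed $\mathsf{SNR}_{s,j}\ge0$, $h_j$ is quasi-concave as a function of $(\mathsf{SNR}_{r,j},\mathsf{SNR}_{s,r})\in[0,\infty)^2$.
   Context: $h_j$ is the effective SNR at destination $j$ of a quantize-forward scheme in a real AWGN multicast relay channel with source $s$, relay $r$, destinations $1,\dots,N$ and link SNRs $\mathsf{SNR}_{u,v}\ge0$. A function $F$ on a convex set is quasi-concave if $F(\lambda x_1+(1-\lambda)x_2)\ge\min(F(x_1),F(x_2))$ for all $x_1,x_2$ and $\lambda\in[0,1]$. *)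

From mathcomp Require Import all_boot all_order all_algebra.
Set Implicit Arguments. Unset Strict Implicit. Unset Printing Implicit Defensive.
Import Order.TTheory GRing.Theory Num.Theory.
Local Open Scope ring_scope.

Definition hj {R : realFieldType} (snr_sj snr_rj snr_sr : R) : R :=
  snr_sj + snr_rj * snr_sr / (snr_sj + snr_rj + snr_sr + 1).

Definition quasi_concave_on {R : realFieldType} (D : R * R -> Prop)
  (F : R * R -> R) : Prop :=
  forall x1 x2 : R * R, D x1 -> D x2 -> forall lam : R, 0 <= lam <= 1 ->
    Num.min (F x1) (F x2) <=
    F (lam * x1.1 + (1 - lam) * x2.1, lam * x1.2 + (1 - lam) * x2.2).

Definition nonneg_quadrant {R : realFieldType} (x : R * R) : Prop :=
  0 <= x.1 /\ 0 <= x.2.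

From mathcomp Require Import all_boot all_order all_algebra.
From mathcomp Require Import ring lra.
Set Implicit Arguments. Unset Strict Implicit. Unset Printing Implicit Defensive.
Import Order.TTheory GRing.Theory Num.Theory.
Local Open Scope ring_scope.

(* With c := SNR_sj + 1 > 0, the superlevel set {h_j >= SNR_sj + t} in the
   quadrant is {(a, b) | t (a + b + c) <= a b}.  For t <= 0 this is the whole
   quadrant; for t > 0 it is {a > t, b > t, (a - t)(b - t) >= t^2 + t c}, the
   region above a branch of a hyperbola, which is convex.  Convex superlevel
   sets are exactly quasi-concavity. *)

Section QuasiConcavity.
Variable R : realFieldType.

Lemma quasi_concave_onP (D : R * R -> Prop) (F : R * R -> R) :
  (forall t x1 x2, D x1 -> D x2 -> t <= F x1 -> t <= F x2 ->
     forall lam, 0 <= lam <= 1 ->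
     t <= F (lam * x1.1 + (1 - lam) * x2.1, lam * x1.2 + (1 - lam) * x2.2)) ->
  quasi_concave_on D F.
Proof. by move=> convF x1 x2 Dx1 Dx2; apply: convF; rewrite // ge_min lexx ?orbT. Qed.

Lemma convex_comb_ge0 (lam x y : R) :
  0 <= lam <= 1 -> 0 <= x -> 0 <= y -> 0 <= lam * x + (1 - lam) * y.
Proof. by move=> /andP[l0 l1] x0 y0; apply: addr_ge0; apply: mulr_ge0; lra. Qed.

Lemma cross_mul_ge (u1 v1 u2 v2 K : R) :
  0 < u1 -> 0 < v1 -> 0 < u2 -> 0 < v2 -> 0 <= K ->
  K <= u1 * v1 -> K <= u2 * v2 -> 2 * K <= u1 * v2 + u2 * v1.
Proof.
move=> u1_gt0 v1_gt0 u2_gt0 v2_gt0 K_ge0 K1 K2.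
have amgm : 4 * (u1 * v1) * (u2 * v2) <= (u1 * v2 + u2 * v1) ^+ 2.
  by have := sqr_ge0 (u1 * v2 - u2 * v1); rewrite !expr2; nra.
have KK : K * K <= (u1 * v1) * (u2 * v2) by apply: ler_pM.
have cross_gt0 : 0 < u1 * v2 + u2 * v1 by rewrite addr_gt0 // mulr_gt0.
rewrite expr2 in amgm; nra.
Qed.

Lemma hyperbola_region_convex (u1 v1 u2 v2 K lam : R) :
  0 < u1 -> 0 < v1 -> 0 < u2 -> 0 < v2 -> 0 <= K ->
  K <= u1 * v1 -> K <= u2 * v2 -> 0 <= lam <= 1 ->
  K <= (lam * u1 + (1 - lam) * u2) * (lam * v1 + (1 - lam) * v2).
Proof.
move=> u1_gt0 v1_gt0 u2_gt0 v2_gt0 K_ge0 K1 K2 /andP[l0 l1].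
have cross := cross_mul_ge u1_gt0 v1_gt0 u2_gt0 v2_gt0 K_ge0 K1 K2.
have : K * (lam * lam) <= u1 * v1 * (lam * lam) by apply: ler_wpM2r; nra.
have : K * ((1 - lam) * (1 - lam)) <= u2 * v2 * ((1 - lam) * (1 - lam)).
  by apply: ler_wpM2r; nra.
have : 2 * K * (lam * (1 - lam)) <= (u1 * v2 + u2 * v1) * (lam * (1 - lam)).
  by apply: ler_wpM2r => //; apply: mulr_ge0; lra.
nra.
Qed.

Lemma lt_of_mul_ge (a b c t : R) : 0 <= a -> 0 <= b -> 0 < c -> 0 < t ->
  t * (a + b + c) <= a * b -> t < a /\ t < b.
Proof.
move=> a_ge0 b_ge0 c_gt0 t_gt0 tab; split; rewrite ltNge; apply/negP => le_t.
  have : a * b <= t * b by apply: ler_wpM2r.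
  nra.
have : a * b <= a * t by apply: ler_wpM2l.
nra.
Qed.

Lemma superlevel_shift (a b c t : R) :
  (t * (a + b + c) <= a * b) = (t * t + t * c <= (a - t) * (b - t)).
Proof. by rewrite -subr_ge0 -[RHS]subr_ge0; congr (0 <= _); ring. Qed.

Lemma superlevel_convex (a1 b1 a2 b2 c t lam : R) :
  0 <= a1 -> 0 <= b1 -> 0 <= a2 -> 0 <= b2 -> 0 < c -> 0 <= lam <= 1 ->
  t * (a1 + b1 + c) <= a1 * b1 -> t * (a2 + b2 + c) <= a2 * b2 ->
  t * ((lam * a1 + (1 - lam) * a2) + (lam * b1 + (1 - lam) * b2) + c)
    <= (lam * a1 + (1 - lam) * a2) * (lam * b1 + (1 - lam) * b2).
Proof.
move=> a1_ge0 b1_ge0 a2_ge0 b2_ge0 c_gt0 hlam t1 t2.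
set a := lam * a1 + _; set b := lam * b1 + _.
have a_ge0 : 0 <= a by apply: convex_comb_ge0.
have b_ge0 : 0 <= b by apply: convex_comb_ge0.
have [t_le0|t_gt0] := lerP t 0.
  apply: (le_trans _ (mulr_ge0 a_ge0 b_ge0)).
  by apply: mulr_le0_ge0 => //; lra.
have [a1_gt b1_gt] := lt_of_mul_ge a1_ge0 b1_ge0 c_gt0 t_gt0 t1.
have [a2_gt b2_gt] := lt_of_mul_ge a2_ge0 b2_ge0 c_gt0 t_gt0 t2.
move: t1 t2; rewrite !superlevel_shift => t1 t2.
have -> : a - t = lam * (a1 - t) + (1 - lam) * (a2 - t) by rewrite /a; ring.
have -> : b - t = lam * (b1 - t) + (1 - lam) * (b2 - t) by rewrite /b; ring.
apply: hyperbola_region_convex; rewrite ?subr_gt0 //.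
by apply: addr_ge0; apply: mulr_ge0; rewrite ltW.
Qed.

Lemma ler_hj (s a b t : R) : 0 <= s -> 0 <= a -> 0 <= b ->
  (t <= hj s a b) = ((t - s) * (a + b + (s + 1)) <= a * b).
Proof. by move=> s_ge0 a_ge0 b_ge0; rewrite /hj -lerBlDl ler_pdivlMr //; lra. Qed.

End QuasiConcavity.

Theorem lemma2 (R : realFieldType) (N : nat) (j : 'I_N) (snr_sj : R) :
  (0 < N)%N -> 0 <= snr_sj ->
  quasi_concave_on nonneg_quadrant
    (fun x : R * R => hj snr_sj x.1 x.2).
Proof.
move=> _ s_ge0; apply: quasi_concave_onP => t [a1 b1] [a2 b2] [/= a1_ge0 b1_ge0].
move=> [/= a2_ge0 b2_ge0]; rewrite !ler_hj // => t1 t2 lam hlam /=.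
rewrite ler_hj ?convex_comb_ge0 //.
apply: superlevel_convex => //; lra.
Qed.
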